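(* Let $G=(V,E)$ be a finite simple connected graph with $n=|V|$ vertices and graph distance $d$, and let $\omega\colon V\to(0,\infty)$ be a weight function with total weight $\omega=\omega(V)$. Let $\delta>0$ and $s=\frac{8\ln n}{\delta^2}$. Let $S=\{m_1,\dots,m_s\}$ be a random sample (multiset) of $s$ vertices, drawn independently with $\Pr(m_i=v)=\omega(v)/\omega$, and let $\Phi^{*}(v)=\sum_{u\in S}d(u,v)$ (sum over the multiset, with multiplicity). Let $q$ be a vertex such that for each neighbor $v\in N(q)$ it holds $\Phi^{*}(q)\le \Phi^{*}(v)+\delta s$. Then, with probability at least $1-n^{-3}$, the vertex $q$ is $\delta$-close to a median, i.e. $\Lambda(q)\le\left(\frac12+\delta\right)\omega$.
   Context: For a vertex $q$ and a vertex $v$, a vertex $u$ is consistent with the pair $(q,v)$ if $q=v=u$, or $q\neq v$ and $v$ lies on a shortest path between $u$ and $q$; $N(q,v)$ denotes the set of all vertices consistent with $(q,v)$. $N(q)$ is the set of neighbors of $q$. For $X\subseteq V$, $\omega(X)=\sum_{u\in X}\omega(u)$. Define $\Lambda(v)=\max_{u\in N(v)}\omega(N(v,u))$. A vertex $q$ is $\delta$-close to a median if $\Lambda(q)\le(\frac12+\delta)\omega(V)$. *)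

From mathcomp Require Import all_boot all_order all_algebra.
From mathcomp Require Import reals exp.
Set Implicit Arguments. Unset Strict Implicit. Unset Printing Implicit Defensive.
Import Order.TTheory GRing.Theory Num.Theory.
Local Open Scope ring_scope.

Section Graph.
Variables (T : finType) (e : rel T).

Definition reach (k : nat) (u v : T) : bool :=
  [exists p : k.-tuple T, path e u p && (last u p == v)].

(* graph distance: length of a shortest walk (= shortest path); for
   connected graphs a shortest path has < #|T| edges. *)
Definition gdist (u v : T) : nat :=
  \big[minn/#|T|]_(k < #|T| | reach k u v) k.

Definition Ncons (q v : T) : {set T} :=
  if q == v then [set q]
  else [set u | gdist u q == (gdist u v + gdist v q)%N].

Variable (R : realType) (w : T -> R).

Definition wt (X : {set T}) : R := \sum_(u in X) w u.

Definition Lambda (q : T) : R := \big[Num.max/0]_(v | e q v) wt (Ncons q v).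

Definition delta_close (delta : R) (q : T) : bool :=
  Lambda q <= (1/2 + delta) * wt [set: T].

Definition Phi_star (s : nat) (S : s.-tuple T) (v : T) : R :=
  \sum_(i < s) (gdist (tnth S i) v)%:R.

(* probability of an event on s i.i.d. samples with Pr(m_i = v) = w v / w(V) *)
Definition sample_prob (s : nat) (P : pred (s.-tuple T)) : R :=
  \sum_(S : s.-tuple T | P S) \prod_(i < s) (w (tnth S i) / wt [set: T]).

End Graph.

From mathcomp Require Import all_boot all_order all_algebra.
From mathcomp Require Import reals exp.
From mathcomp Require Import classical_sets topology normedtype sequences derive realfun.
From mathcomp Require Import ring lra.
Set Implicit Arguments. Unset Strict Implicit. Unset Printing Implicit Defensive.
Import Order.TTheory GRing.Theory Num.Theory.
Import numFieldNormedType.Exports.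
Local Open Scope ring_scope.

(* If q is not delta-close, some neighbour v of q has w(N(q,v)) > (1/2 + delta) w(V).
   A sample point in N(q,v) is one step farther from q than from v, and any other
   sample point is at most one step closer, so Phi*(q) - Phi*(v) >= 2X - s, where X
   counts the sample points in N(q,v).  Local optimality of q thus forces
   X <= (1 + delta) s / 2 although E X > (1/2 + delta) s; by Hoeffding's inequality
   this has probability at most exp (- delta^2 s / 2) <= n^-4, and a union bound
   over q gives n^-3. *)

Section ExpBounds.
Variable R : realType.
Local Open Scope classical_set_scope.

Lemma ler0_is_derive_le (f df : R -> R) (a h : R) :
  (forall x : R, is_derive x (1 : R) f (df x)) -> (forall x, a <= x -> df x <= 0) ->
  a <= h -> f h <= f a.
Proof.
move=> fd df_le0 ah.
have fc : {within `[a, h], continuous f}.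
  apply/continuous_subspaceT => x.
  by apply/differentiable_continuous/derivable1_diffP; have [] := fd x.
have [c] := MVT_segment ah (fun x _ => fd x) fc.
rewrite in_itv /= => /andP[ac _] E.
by rewrite -subr_le0 E mulr_le0_ge0 ?df_le0 ?subr_ge0.
Qed.

Lemma is_derive_expRN (x : R) :
  is_derive x (1 : R) (fun y : R => expR (- y)) (- expR (- x)).
Proof.
have := @is_derive1_comp R expR (fun y => - y) x (expR (- x)) (-1).
by rewrite mulrN1; apply.
Qed.

(* The ratio [(1 - e^-k) / (1 + e^-k)] is [tanh (k/2)], which is at most [k/2]. *)
Lemma tanh_half_le (k : R) : 0 <= k -> 2 * (1 - expR (- k)) <= k * (1 + expR (- k)).
Proof.
move=> k_ge0.
pose f (x : R) := 2 * (1 - expR (- x)) - x * (1 + expR (- x)).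
pose df (x : R) := (x + 1) * expR (- x) - 1.
have fd (x : R) : is_derive x (1 : R) f (df x).
  have dexp := is_derive_expRN x; apply: is_derive_eq; rewrite /df /GRing.scale /=; ring.
have : f k <= f 0.
  apply: (ler0_is_derive_le fd) => // x x_ge0.
  rewrite subr_le0 expRN -(ler_pM2r (expR_gt0 x)) mulfVK ?expR_eq0 // mul1r.
  by rewrite addrC expR_ge1Dx.
by rewrite /f oppr0 expR0 subrr mulr0 mul0r subr0 subr_le0.
Qed.

(* With [y = e^(-x/2)]: [(1+y)^2 p(1-p) <= 1 - p + p y^2] and [(1-y)/(1+y) <= x/4]. *)
Lemma bernoulli_mgf_slope_le (p x : R) : 0 <= p <= 1 -> 0 <= x ->
  p * (1 - p) * (1 - expR (- x)) <= x / 4 * (1 - p + p * expR (- x)).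
Proof.
move=> /andP[p_ge0 p_le1] x_ge0.
pose y := expR (- (x / 2)).
have y_ge0 : 0 <= y := expR_ge0 _.
have -> : expR (- x) = y * y by rewrite /y -expRD; congr expR; field.
have tanh_y : 2 * (1 - y) <= x / 2 * (1 + y) by apply: tanh_half_le; rewrite divr_ge0.
have var_le : (1 + y) ^+ 2 * (p * (1 - p)) <= 1 - p + p * (y * y).
  rewrite -subr_ge0.
  have -> : 1 - p + p * (y * y) - (1 + y) ^+ 2 * (p * (1 - p)) = (1 - p - y * p) ^+ 2 by ring.
  exact: sqr_ge0.
have var_ge0 : 0 <= (1 + y) * (p * (1 - p)) by rewrite !mulr_ge0 ?subr_ge0 ?addr_ge0.
have -> : p * (1 - p) * (1 - y * y) = (1 - y) * ((1 + y) * (p * (1 - p))) by ring.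
apply: (le_trans (ler_wpM2r var_ge0 (_ : 1 - y <= x / 4 * (1 + y)))); first lra.
have -> : x / 4 * (1 + y) * ((1 + y) * (p * (1 - p)))
    = x / 4 * ((1 + y) ^+ 2 * (p * (1 - p))) by ring.
by rewrite ler_wpM2l // divr_ge0.
Qed.

Lemma hoeffding_bernoulli (p h : R) : 0 <= p <= 1 -> 0 <= h ->
  (1 - p + p * expR (- h)) * expR (h * p) <= expR (h ^+ 2 / 8).
Proof.
move=> p01 h_ge0.
pose g (x : R) := x * p - x ^+ 2 / 8.
pose M (x : R) := (1 - p + p * expR (- x)) * expR (g x).
have gd (x : R) : is_derive x (1 : R) (fun y => expR (g y)) (expR (g x) * (p - x / 4)).
  apply: is_derive1_comp; apply: is_derive_eq.
  by rewrite /GRing.scale /=; field.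
pose dM (x : R) :=
  (p * (1 - p) * (1 - expR (- x)) - x / 4 * (1 - p + p * expR (- x))) * expR (g x).
have Md (x : R) : is_derive x (1 : R) M (dM x).
  have dexp := is_derive_expRN x; apply: is_derive_eq; rewrite /dM /GRing.scale /=; ring.
have : M h <= M 0.
  apply: (ler0_is_derive_le Md) => // x x_ge0.
  by rewrite mulr_le0_ge0 ?expR_ge0 // subr_le0 bernoulli_mgf_slope_le.
rewrite /M /g oppr0 expR0 expr0n /= !mul0r subrr expR0 mulr1 subrK.
have -> : expR (h * p) = expR (h * p - h ^+ 2 / 8) * expR (h ^+ 2 / 8).
  by rewrite -expRD subrK.
rewrite mulr1 mulrA => M_le1.
by rewrite -[leRHS]mul1r ler_wpM2r ?expR_ge0.
Qed.

End ExpBounds.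

Section Distance.
Variables (T : finType) (e : rel T).

Lemma reach0 u v : reach e 0 u v = (u == v).
Proof.
apply/existsP/eqP => [[p /andP[_ /eqP]]|->]; first by rewrite (tuple0 p).
by exists [tuple]; rewrite /= eqxx.
Qed.

Lemma reachS k u v v' : reach e k u v -> e v v' -> reach e k.+1 u v'.
Proof.
move=> /existsP[p /andP[pp /eqP pl]] evv'.
have sz : size (rcons p v') == k.+1 by rewrite size_rcons size_tuple.
apply/existsP; exists (Tuple sz).
by rewrite /= rcons_path pp pl evv' last_rcons eqxx.
Qed.

Lemma gdist_le_card u v : (gdist e u v <= #|T|)%N.
Proof.
apply: (big_ind (fun m => m <= #|T|)%N) => // [x y|k _]; last exact: ltnW.
by rewrite geq_min => ->.
Qed.

Lemma gdist_le_reach k u v : (k < #|T|)%N -> reach e k u v -> (gdist e u v <= k)%N.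
Proof.
move=> kT ukv; rewrite /gdist.
have : Ordinal kT \in index_enum 'I_#|T| by rewrite mem_index_enum.
elim: (index_enum _) => // i l IHl; rewrite inE big_cons => /orP[/eqP <-|il].
  by rewrite ukv geq_minl.
by case: ifP => _; [apply: leq_trans (geq_minr _ _) (IHl il) | apply: IHl].
Qed.

Lemma gdist_reach u v : (gdist e u v < #|T|)%N -> reach e (gdist e u v) u v.
Proof.
rewrite /gdist; apply: (big_ind (fun m => m < #|T| -> reach e m u v)%N).
- by rewrite ltnn.
- by move=> x y rx ry; rewrite /minn; case: ifP.
- by [].
Qed.

Lemma gdist_gt0 u v : u != v -> (0 < gdist e u v)%N.
Proof.
move=> uv; rewrite lt0n; apply: contra uv => /eqP d0.
have /gdist_reach : (gdist e u v < #|T|)%N by rewrite d0; apply/card_gt0P; exists u.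
by rewrite d0 reach0.
Qed.

Lemma gdist_edge u q v : e q v -> (gdist e u v <= (gdist e u q).+1)%N.
Proof.
move=> eqv; case: (ltnP (gdist e u q).+1 #|T|) => [lt_T | le_T].
  exact: gdist_le_reach lt_T (reachS (gdist_reach (ltnW lt_T)) eqv).
exact: leq_trans (gdist_le_card u v) le_T.
Qed.

Lemma gdist_Ncons u q v : q != v -> u \in Ncons e q v -> (gdist e u v < gdist e u q)%N.
Proof.
move=> /negbTE qv; rewrite /Ncons qv inE => /eqP->.
by rewrite -{1}[gdist e u v]addn0 ltn_add2l gdist_gt0 // eq_sym qv.
Qed.

End Distance.

Lemma count_tnth (T : eqType) (R : pzSemiRingType) s (S : s.-tuple T) (a : pred T) :
  (count a S)%:R = \sum_(i < s) (a (tnth S i))%:R :> R.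
Proof.
rewrite -sum1_count big_tuple natr_sum big_mkcond /=.
by apply: eq_bigr => i _; case: (a _).
Qed.

Lemma Phi_star_sub_ge (T : finType) (e : rel T) (R : realType) s (S : s.-tuple T) q v :
  q != v -> e q v ->
  2 * (count (mem (Ncons e q v)) S)%:R - s%:R <= Phi_star e R S q - Phi_star e R S v.
Proof.
move=> qv eqv; rewrite /Phi_star -sumrB count_tnth mulr_sumr.
have -> : s%:R = \sum_(i < s) 1 :> R by rewrite sumr_const card_ord.
rewrite -sumrB; apply: ler_sum => i _.
set u := tnth S i; case: (boolP (u \in Ncons e q v)) => uN /=.
- have := gdist_Ncons qv uN; rewrite uN mulr1n -(ler_nat R) -natr1; lra.
- have := gdist_edge u eqv; rewrite (negbTE uN) mulr0n -(ler_nat R) -natr1; lra.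
Qed.

Lemma sum_tuple_prod (T : finType) (R : comPzSemiRingType) s (g : T -> R) :
  \sum_(S : s.-tuple T) \prod_(i < s) g (tnth S i) = (\sum_x g x) ^+ s.
Proof.
rewrite -[s in _ ^+ s]card_ord -prodr_const bigA_distr_bigA /=.
rewrite (reindex (fun S : s.-tuple T => [ffun i => tnth S i])) /=.
  by apply: eq_bigr => S _; apply: eq_bigr => i _; rewrite ffunE.
exists (fun f : {ffun 'I_s -> T} => [tuple f i | i < s]) => [S _ | f _].
  by apply: eq_from_tnth => i; rewrite tnth_mktuple ffunE.
by apply/ffunP => i; rewrite ffunE tnth_mktuple.
Qed.

Section Sampling.
Variables (T : finType) (R : realType) (w : T -> R).
Hypothesis w_ge0 : forall x, 0 <= w x.

Local Notation W := (wt w [set: T]).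

Lemma wt_setT : W = \sum_x w x.
Proof. by apply: eq_bigl => x; rewrite inE. Qed.

Lemma wt_ge0 (A : {set T}) : 0 <= wt w A.
Proof. exact: sumr_ge0. Qed.

Lemma wt_le_setT (A : {set T}) : wt w A <= W.
Proof. by rewrite wt_setT [leRHS](bigID (mem A)) lerDl sumr_ge0. Qed.

Lemma wt_setT_gt0 x0 : 0 < w x0 -> 0 < W.
Proof. by move=> wx0; rewrite wt_setT (bigD1 x0) //= ltr_pwDl ?sumr_ge0. Qed.

Lemma sum_weight_ratio : 0 < W -> \sum_x w x / W = 1.
Proof. by move=> W_gt0; rewrite -mulr_suml -wt_setT divff ?gt_eqF. Qed.

Lemma weight_ratio_ge0 x : 0 <= w x / W.
Proof. by rewrite divr_ge0 ?wt_ge0. Qed.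

Lemma sample_probT s : sample_prob w (@predT (s.-tuple T)) = (\sum_x w x / W) ^+ s.
Proof. exact: sum_tuple_prod. Qed.

Lemma sample_prob_union_bound s (I : finType) (P : pred (s.-tuple T))
    (Q : I -> pred (s.-tuple T)) :
  (forall S, ~~ P S -> exists i, Q i S) ->
  sample_prob w (@predT (s.-tuple T)) - \sum_i sample_prob w (Q i) <= sample_prob w P.
Proof.
move=> cover; rewrite /sample_prob (bigID P) /= lerBlDl addrC lerD2r.
under [leRHS]eq_bigr do rewrite big_mkcond.
rewrite exchange_big big_mkcond /=; apply: ler_sum => S _.
have terms_ge0 i : 0 <= (if Q i S then \prod_(j < s) (w (tnth S j) / W) else 0).
  by case: ifP => // _; apply: prodr_ge0 => j _; exact: weight_ratio_ge0.
case: ifP => [/cover[i Qi] | _]; last exact: sumr_ge0.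
by rewrite (bigD1 i) //= Qi lerDl sumr_ge0.
Qed.

Lemma sample_prob_count_le_mgf s (A : {set T}) (c lam : R) : 0 < W -> 0 <= lam ->
  sample_prob w (fun S : s.-tuple T => (count (mem A) S)%:R <= c)
    <= expR (lam * c) * (1 - wt w A / W + wt w A / W * expR (- lam)) ^+ s.
Proof.
move=> W_gt0 lam_ge0.
pose tilt x := w x / W * expR (- lam * (x \in A)%:R).
have markov : sample_prob w (fun S : s.-tuple T => (count (mem A) S)%:R <= c)
    <= \sum_(S : s.-tuple T) \prod_(i < s) (w (tnth S i) / W)
                             * expR (lam * (c - (count (mem A) S)%:R)).
  rewrite /sample_prob big_mkcond /=; apply: ler_sum => S _.
  have P_ge0 : 0 <= \prod_(i < s) (w (tnth S i) / W).
    by apply: prodr_ge0 => i _; exact: weight_ratio_ge0.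
  case: ifP => [count_le|_]; last by rewrite mulr_ge0 ?expR_ge0.
  by rewrite ler_peMr // -[leLHS]expR0 ler_expR mulr_ge0 // subr_ge0.
have tilt_prod S : \prod_(i < s) (w (tnth S i) / W) * expR (lam * (c - (count (mem A) S)%:R))
    = expR (lam * c) * \prod_(i < s) tilt (tnth S i).
  rewrite /tilt [in RHS]big_split /= [in RHS]mulrCA mulrBr expRD.
  congr (_ * (_ * _)).
  rewrite count_tnth mulr_sumr -sumrN expR_sum.
  by apply: eq_bigr => i _; rewrite mulNr.
have tilt_in : \sum_(x in A) tilt x = wt w A / W * expR (- lam).
  rewrite -[wt w A]/(\sum_(u in A) w u) !mulr_suml.
  by apply: eq_bigr => x xA; rewrite /tilt xA mulr1.
have tilt_out : \sum_(x | x \notin A) tilt x = 1 - wt w A / W.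
  rewrite -(sum_weight_ratio W_gt0) [in RHS](bigID (mem A)) /=.
  rewrite -[wt w A]/(\sum_(u in A) w u) mulr_suml addrC addrK.
  by apply: eq_bigr => x /negbTE xA; rewrite /tilt xA mulr0 expR0 mulr1.
have tilt_sum : \sum_x tilt x = 1 - wt w A / W + wt w A / W * expR (- lam).
  by rewrite (bigID (mem A)) /= tilt_in tilt_out addrC.
apply: (le_trans markov); under eq_bigr do rewrite tilt_prod.
by rewrite -mulr_sumr sum_tuple_prod tilt_sum.
Qed.

Lemma sample_prob_count_le s (A : {set T}) (c t : R) : 0 < W -> 0 <= t ->
  c + t <= wt w A / W ->
  sample_prob w (fun S : s.-tuple T => (count (mem A) S)%:R <= c * s%:R)
    <= expR (- (2 * t ^+ 2 * s%:R)).
Proof.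
move=> W_gt0 t_ge0 ct_le_p.
set p := wt w A / W.
have p01 : 0 <= p <= 1 by rewrite divr_ge0 ?wt_ge0 // ler_pdivrMr // mul1r wt_le_setT.
have lam_ge0 : 0 <= 4 * t by rewrite mulr_ge0.
apply: (le_trans (sample_prob_count_le_mgf s A (c * s%:R) W_gt0 lam_ge0)).
have mgf_le : 1 - p + p * expR (- (4 * t)) <= expR ((4 * t) ^+ 2 / 8 - 4 * t * p).
  rewrite expRD -ler_pdivrMr ?expR_gt0 // -expRN opprK.
  exact: hoeffding_bernoulli.
have base_ge0 : 0 <= 1 - p + p * expR (- (4 * t)).
  by case/andP: p01 => p_ge0 p_le1; rewrite addr_ge0 ?subr_ge0 // mulr_ge0 // expR_ge0.
have := lerXn2r s base_ge0 (expR_ge0 _) mgf_le.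
move=> /(ler_wpM2l (expR_ge0 (4 * t * (c * s%:R)))) /le_trans; apply.
rewrite -expRM_natr -expRD ler_expR.
have : 0 <= 4 * t * s%:R * (p - (c + t)) by rewrite !mulr_ge0 ?subr_ge0.
nra.
Qed.

End Sampling.

Lemma sample_size_ge (R : realType) (n s : nat) (delta : R) : 0 < delta ->
  s = `|Num.ceil (8 * ln n%:R / delta ^+ 2)|%N -> 8 * ln n%:R <= delta ^+ 2 * s%:R.
Proof.
move=> delta_gt0 ->.
have ln_n_ge0 : 0 <= ln (n%:R : R).
  by case: n => [|n]; [rewrite ln0 | apply: ln_ge0; rewrite ler1n].
have ratio_ge0 : 0 <= 8 * ln (n%:R : R) / delta ^+ 2.
  by rewrite divr_ge0 ?sqr_ge0 // mulr_ge0.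
rewrite natr_absz ger0_norm ?ceil_ge0; last by apply: lt_le_trans ratio_ge0; rewrite ltrN10.
by rewrite [leRHS]mulrC -ler_pdivrMr ?exprn_gt0 // ceil_ge.
Qed.

Section LocalMedian.
Variables (T : finType) (e : rel T) (R : realType) (w : T -> R) (delta : R) (s : nat).
Hypothesis e_irr : irreflexive e.
Hypothesis w_pos : forall v, 0 < w v.
Hypothesis delta_pos : 0 < delta.

Local Notation W := (wt w [set: T]).

Definition locally_optimal (S : s.-tuple T) (q : T) : bool :=
  [forall v, e q v ==> (Phi_star e R S q <= Phi_star e R S v + delta * s%:R)].

(* Fixing one heavy neighbour per vertex keeps the union bound over vertices only. *)
Definition heavy_nbr (q : T) : option T :=
  [pick v | e q v && ((1/2 + delta) * W < wt w (Ncons e q v))].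

Definition undersampled (q : T) (S : s.-tuple T) : bool :=
  if heavy_nbr q is Some v then
    (count (mem (Ncons e q v)) S)%:R <= (1 + delta) / 2 * s%:R
  else false.

Let w_ge0 x : 0 <= w x := ltW (w_pos x).

Lemma undersampled_of_not_delta_close S q :
  locally_optimal S q -> ~~ delta_close e w delta q -> undersampled q S.
Proof.
move=> opt not_close; rewrite /undersampled /heavy_nbr.
case: pickP => [v /andP[eqv _] | light].
  have qv : q != v by apply: contraTneq eqv => ->; rewrite e_irr.
  have := Phi_star_sub_ge R S qv eqv; have := implyP (forallP opt v) eqv.
  have -> : (1 + delta) / 2 * s%:R = (s%:R + delta * s%:R) / 2 by field.
  move: (Phi_star e R S q) (Phi_star e R S v) (count _ S)%:R (delta * s%:R) => a b x ds.
  lra.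
case/negP: not_close; apply: bigmax_le => [|v eqv].
  by rewrite mulr_ge0 ?(wt_ge0 w_ge0) ?addr_ge0 ?divr_ge0 ?ltW.
by rewrite leNgt; have := light v; rewrite /= eqv /= => ->.
Qed.

Lemma sample_prob_undersampled q : 8 * ln #|T|%:R <= delta ^+ 2 * s%:R ->
  sample_prob w (undersampled q) <= #|T|%:R ^- 4.
Proof.
move=> s_large.
have n_gt0 : (0 < #|T|)%N by apply/card_gt0P; exists q.
have W_gt0 := wt_setT_gt0 w_ge0 (w_pos q).
rewrite /undersampled /heavy_nbr; case: pickP => [v /andP[_ heavy] | _]; last first.
  by rewrite /sample_prob big_pred0 // invr_ge0 exprn_ge0.
have c_le_p : (1 + delta) / 2 + delta / 2 <= wt w (Ncons e q v) / W.
  by rewrite ler_pdivlMr //; apply: ltW; apply: le_lt_trans heavy; lra.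
have t_ge0 : 0 <= delta / 2 by rewrite divr_ge0 // ltW.
apply: (le_trans (sample_prob_count_le w_ge0 s W_gt0 t_ge0 c_le_p)).
have n_pos : (#|T|%:R : R) \in Num.pos by rewrite posrE ltr0n.
rewrite -(lnK n_pos) -expRM_natr -expRN ler_expR; nra.
Qed.

End LocalMedian.

Theorem theorem4 (T : finType) (e : rel T)
  (e_sym : symmetric e) (e_irr : irreflexive e)
  (e_conn : forall u v : T, connect e u v)
  (R : realType) (w : T -> R) (w_pos : forall v, 0 < w v)
  (delta : R) (delta_pos : 0 < delta)
  (s : nat) (hs : s = `|Num.ceil (8 * ln (#|T|%:R) / delta ^+ 2)|%N) :
  1 - (#|T|%:R) ^- 3 <=
  sample_prob w
    (fun S : s.-tuple T =>
       [forall q : T,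
          [forall v : T, e q v ==>
             (Phi_star e R S q <= Phi_star e R S v + delta * s%:R)]
          ==> delta_close e w delta q]).
Proof.
set n := #|T|.
have w_ge0 x : 0 <= w x := ltW (w_pos x).
have total : sample_prob w (@predT (s.-tuple T)) = 1.
  rewrite sample_probT; have [x0 _ | T0] := pickP (@predT T).
    by rewrite sum_weight_ratio ?expr1n // (wt_setT_gt0 w_ge0 (w_pos x0)).
  by rewrite hs /n (eq_card0 T0) ln0 // mulr0 mul0r ceil0 expr0.
apply: (le_trans _ (sample_prob_union_bound w_ge0 (Q := @undersampled _ e _ w delta s) _)).
  rewrite total lerD2l lerN2.
  have s_large := sample_size_ge delta_pos hs.
  apply: le_trans (ler_sum _ (fun q _ => sample_prob_undersampled e w_pos delta_pos q s_large)) _.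
  rewrite sumr_const -/n; have [-> | n_gt0] := posnP n; first by rewrite mulr0n expr0n invr0.
  have n_neq0 : n%:R != 0 :> R by rewrite pnatr_eq0 -lt0n.
  have -> : n%:R ^- 4 *+ n = n%:R ^- 3 :> R by rewrite -mulr_natr; field.
  exact: lexx.
move=> S /forallPn[q]; rewrite negb_imply => /andP[opt not_close].
by exists q; apply: undersampled_of_not_delta_close.
Qed.
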